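(* Let $\beta>\alpha>0$ and let $q=(q_1,q_2,q_3,q_4)$ be a convex non-collinear central configuration of the planar Newtonian 4-body problem with masses $m_1=m_2=\beta$, $m_3=m_4=\alpha$, with $q_1,q_2,q_3,q_4$ in cyclic order around the convex quadrilateral. If $r_{23}=r_{14}$, then $\Delta_4=-\Delta_3$.
   Context: Bodies have positions $q_i\in\mathbb{R}^2$ and masses $m_i>0$; $r_{ij}=\|q_i-q_j\|$; $U(q)=\sum_{i<j}m_im_j/r_{ij}$. A configuration with distinct points and $\sum_i m_iq_i=0$ is a central configuration if $\sum_{j\neq i} m_j\frac{q_j-q_i}{r_{ij}^3}=\lambda q_i$ for all $i$ and some constant $\lambda$. ''Convex non-collinear'': the four points are vertices of a strictly convex quadrilateral. For $1\le i\le 4$, $|\Delta_i|$ denotes the area of the triangle formed by the three points $q_j$, $j\neq i$, and the oriented areas are $\Delta_1=-|\Delta_1|$, $\Delta_2=|\Delta_2|$, $\Delta_3=-|\Delta_3|$, $\Delta_4=|\Delta_4|$; they satisfy $\Delta_1+\Delta_2+\Delta_3+\Delta_4=0$. *)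

From Stdlib Require Import Reals List.
Import ListNotations.
Open Scope R_scope.

Definition pt := (R * R)%type.

Definition dist2 (a b : pt) : R := sqrt ((fst a - fst b)^2 + (snd a - snd b)^2).

Definition idx : list nat := [1%nat; 2%nat; 3%nat; 4%nat].

Definition rsum (l : list R) : R := fold_right Rplus 0 l.

Definition accel_x (q : nat -> pt) (m : nat -> R) (i : nat) : R :=
  rsum (map (fun j => if Nat.eq_dec j i then 0
                      else m j * (fst (q j) - fst (q i)) / (dist2 (q i) (q j)) ^ 3) idx).
Definition accel_y (q : nat -> pt) (m : nat -> R) (i : nat) : R :=
  rsum (map (fun j => if Nat.eq_dec j i then 0
                      else m j * (snd (q j) - snd (q i)) / (dist2 (q i) (q j)) ^ 3) idx).

Definition central_configuration (q : nat -> pt) (m : nat -> R) : Prop :=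
  (forall i j, In i idx -> In j idx -> i <> j -> q i <> q j) /\
  rsum (map (fun i => m i * fst (q i)) idx) = 0 /\
  rsum (map (fun i => m i * snd (q i)) idx) = 0 /\
  exists lam : R, forall i, In i idx ->
    accel_x q m i = lam * fst (q i) /\ accel_y q m i = lam * snd (q i).

(* twice the signed area of triangle abc *)
Definition orient (a b c : pt) : R :=
  (fst b - fst a) * (snd c - snd a) - (snd b - snd a) * (fst c - fst a).

Definition convex_quad_in_order (q1 q2 q3 q4 : pt) : Prop :=
  (0 < orient q1 q2 q3 /\ 0 < orient q2 q3 q4 /\ 0 < orient q3 q4 q1 /\ 0 < orient q4 q1 q2) \/
  (orient q1 q2 q3 < 0 /\ orient q2 q3 q4 < 0 /\ orient q3 q4 q1 < 0 /\ orient q4 q1 q2 < 0).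

Definition tri_area (a b c : pt) : R := Rabs (orient a b c) / 2.

(* oriented areas with the paper's sign convention:
   Delta_1 = -|Delta_1|, Delta_2 = |Delta_2|, Delta_3 = -|Delta_3|, Delta_4 = |Delta_4|,
   where |Delta_i| is the area of the triangle formed by q_j, j <> i. *)
Definition oDelta (q : nat -> pt) (i : nat) : R :=
  match i with
  | 1%nat => - tri_area (q 2%nat) (q 3%nat) (q 4%nat)
  | 2%nat => tri_area (q 1%nat) (q 3%nat) (q 4%nat)
  | 3%nat => - tri_area (q 1%nat) (q 2%nat) (q 4%nat)
  | 4%nat => tri_area (q 1%nat) (q 2%nat) (q 3%nat)
  | _ => 0
  end.

(* The central configuration equations say that each body is in equilibrium under the
   forces m_j t_ij (q_j - q_i), where t_ij = r_ij^-3 + mu for a suitable constant mu.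
   Taking cross products of the equilibria at q_1 and q_2 gives m_2 t_12 Δ_4 = m_4 t_14 Δ_2
   and m_1 t_12 Δ_3 = m_3 t_23 Δ_1.  Since m_1 m_4 = m_2 m_3 and t_23 = t_14, either
   t_14 = 0 or Δ_2 Δ_3 = Δ_1 Δ_4.  In the first case all t_ij vanish, so the four bodies
   would be pairwise equidistant in the plane, which is impossible.  In the second case
   Δ_1 + Δ_2 + Δ_3 + Δ_4 = 0 turns the relation into (Δ_2 + Δ_4)(Δ_3 + Δ_4) = 0, and
   convexity gives Δ_2 + Δ_4 <> 0. *)

From Stdlib Require Import Reals List Lra Psatz.
Open Scope R_scope.

Definition sqdist (a b : pt) : R := (fst a - fst b) ^ 2 + (snd a - snd b) ^ 2.

Lemma dist2_sym (a b : pt) : dist2 a b = dist2 b a.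
Proof. unfold dist2. f_equal. ring. Qed.

Definition inv_dist3 (a b : pt) : R := / dist2 a b ^ 3.

Lemma pow3_lt (x y : R) : 0 <= x -> x < y -> x ^ 3 < y ^ 3.
Proof.
  intros Hx Hxy.
  assert (0 < (y - x) * (y * y + x * y + x * x)) by (apply Rmult_lt_0_compat; nra).
  nra.
Qed.

Lemma pow3_inj (x y : R) : 0 <= x -> 0 <= y -> x ^ 3 = y ^ 3 -> x = y.
Proof.
  intros Hx Hy H.
  destruct (Rtotal_order x y) as [Hlt | [Heq | Hgt]]; auto.
  - apply pow3_lt in Hlt; lra.
  - apply pow3_lt in Hgt; lra.
Qed.

Lemma inv_dist3_inj (a b c d : pt) :
  inv_dist3 a b = inv_dist3 c d -> sqdist a b = sqdist c d.
Proof.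
  intro H. apply Rinv_eq_reg, pow3_inj in H; try apply sqrt_pos.
  apply sqrt_inj; auto; apply Rplus_le_le_0_compat; apply pow2_ge_0.
Qed.

Lemma orient_cyclic (a b c : pt) : orient a b c = orient b c a.
Proof. unfold orient. ring. Qed.

Lemma orient_swap12 (a b c : pt) : orient b a c = - orient a b c.
Proof. unfold orient. ring. Qed.

Lemma orient_split (a b c d : pt) :
  orient b c d = orient a c d - orient a b d + orient a b c.
Proof. unfold orient. ring. Qed.

(* Three vectors of the plane have a vanishing Gram determinant; for the three edges of a
   regular tetrahedron from one vertex that determinant is D^3 / 2. *)
Lemma planar_equilateral_degenerate (u1 u2 v1 v2 w1 w2 D : R) :
  u1 ^ 2 + u2 ^ 2 = D -> v1 ^ 2 + v2 ^ 2 = D -> w1 ^ 2 + w2 ^ 2 = D ->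
  (u1 - v1) ^ 2 + (u2 - v2) ^ 2 = D -> (u1 - w1) ^ 2 + (u2 - w2) ^ 2 = D ->
  (v1 - w1) ^ 2 + (v2 - w2) ^ 2 = D -> D = 0.
Proof.
  intros Hu Hv Hw Huv Huw Hvw.
  assert (Puv : u1 * v1 + u2 * v2 = D / 2) by lra.
  assert (Puw : u1 * w1 + u2 * w2 = D / 2) by lra.
  assert (Pvw : v1 * w1 + v2 * w2 = D / 2) by lra.
  assert (Gram : (u1 ^ 2 + u2 ^ 2) * ((v1 ^ 2 + v2 ^ 2) * (w1 ^ 2 + w2 ^ 2)
                   - (v1 * w1 + v2 * w2) ^ 2)
                 - (u1 * v1 + u2 * v2) * ((u1 * v1 + u2 * v2) * (w1 ^ 2 + w2 ^ 2)
                   - (v1 * w1 + v2 * w2) * (u1 * w1 + u2 * w2))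
                 + (u1 * w1 + u2 * w2) * ((u1 * v1 + u2 * v2) * (v1 * w1 + v2 * w2)
                   - (v1 ^ 2 + v2 ^ 2) * (u1 * w1 + u2 * w2)) = 0) by ring.
  rewrite Hu, Hv, Hw, Puv, Puw, Pvw in Gram.
  destruct (Req_dec D 0) as [HD | HD]; auto.
  exfalso. apply (pow_nonzero D 3 HD). lra.
Qed.

Lemma equidistant4_collinear (a b c d : pt) :
  sqdist a c = sqdist a b -> sqdist a d = sqdist a b -> sqdist b c = sqdist a b ->
  sqdist b d = sqdist a b -> sqdist c d = sqdist a b -> orient a b c = 0.
Proof.
  intros Hac Had Hbc Hbd Hcd.
  assert (HD : sqdist a b = 0).
  { apply (planar_equilateral_degenerate (fst b - fst a) (snd b - snd a)
             (fst c - fst a) (snd c - snd a) (fst d - fst a) (snd d - snd a));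
      [ | rewrite <- Hac | rewrite <- Had | rewrite <- Hbc | rewrite <- Hbd | rewrite <- Hcd ];
      unfold sqdist; ring. }
  unfold sqdist, orient in *. nra.
Qed.

Lemma convex_quad_orient (p1 p2 p3 p4 : pt) :
  convex_quad_in_order p1 p2 p3 p4 ->
  orient p1 p2 p3 <> 0 /\ orient p2 p3 p4 <> 0 /\ orient p1 p2 p3 + orient p1 p3 p4 <> 0.
Proof.
  unfold convex_quad_in_order.
  rewrite <- (orient_cyclic p1 p3 p4).
  intros [H | H]; repeat split; lra.
Qed.

Definition balanced (a b c d : pt) (wb wc wd : R) : Prop :=
  wb * (fst b - fst a) + wc * (fst c - fst a) + wd * (fst d - fst a) = 0 /\
  wb * (snd b - snd a) + wc * (snd c - snd a) + wd * (snd d - snd a) = 0.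

Lemma balanced_orient {a b c d : pt} {wb wc wd : R} :
  balanced a b c d wb wc wd ->
  wb * orient a b c = wd * orient a c d /\
  wb * orient a b d = - wc * orient a c d /\
  wc * orient a b c = - wd * orient a b d.
Proof.
  intros [Hx Hy].
  assert (cross : forall u v : R,
    wb * ((fst b - fst a) * v - (snd b - snd a) * u)
    + wc * ((fst c - fst a) * v - (snd c - snd a) * u)
    + wd * ((fst d - fst a) * v - (snd d - snd a) * u) = 0).
  { intros u v.
    assert (Ex := f_equal (Rmult v) Hx). assert (Ey := f_equal (Rmult u) Hy). lra. }
  unfold orient. repeat split.
  - generalize (cross (fst c - fst a) (snd c - snd a)). lra.
  - generalize (cross (fst d - fst a) (snd d - snd a)). lra.
  - generalize (cross (fst b - fst a) (snd b - snd a)). lra.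
Qed.

Section CentralConfiguration.
Variables (q : nat -> pt) (m : nat -> R).
Notation Q i := (q i%nat).
Notation M i := (m i%nat).

(* With the centre of mass at the origin, [lam q_i = - (lam / M) sum_j m_j (q_j - q_i)],
   M the total mass, so [mu = lam / M] shifts every [r_ij^-3]. *)
Lemma central_configuration_balanced :
  central_configuration q m -> rsum (map m idx) <> 0 ->
  exists mu : R,
    balanced (Q 1) (Q 2) (Q 3) (Q 4)
      (M 2 * (inv_dist3 (Q 1) (Q 2) + mu)) (M 3 * (inv_dist3 (Q 1) (Q 3) + mu))
      (M 4 * (inv_dist3 (Q 1) (Q 4) + mu)) /\
    balanced (Q 2) (Q 1) (Q 3) (Q 4)
      (M 1 * (inv_dist3 (Q 1) (Q 2) + mu)) (M 3 * (inv_dist3 (Q 2) (Q 3) + mu))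
      (M 4 * (inv_dist3 (Q 2) (Q 4) + mu)) /\
    balanced (Q 3) (Q 1) (Q 2) (Q 4)
      (M 1 * (inv_dist3 (Q 1) (Q 3) + mu)) (M 2 * (inv_dist3 (Q 2) (Q 3) + mu))
      (M 4 * (inv_dist3 (Q 3) (Q 4) + mu)).
Proof.
  intros [_ [Hcx [Hcy [lam Hl]]]] HM.
  exists (lam / rsum (map m idx)).
  assert (Hlam : lam = lam / rsum (map m idx) * rsum (map m idx)) by (field; exact HM).
  generalize dependent (lam / rsum (map m idx)). intros mu Hlam. subst lam.
  destruct (Hl 1%nat) as [E1x E1y]; [simpl; tauto |].
  destruct (Hl 2%nat) as [E2x E2y]; [simpl; tauto |].
  destruct (Hl 3%nat) as [E3x E3y]; [simpl; tauto |].
  unfold accel_x, accel_y, idx, rsum in *. simpl in *.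
  assert (Cx := f_equal (Rmult mu) Hcx). assert (Cy := f_equal (Rmult mu) Hcy).
  rewrite (dist2_sym (Q 2) (Q 1)) in E2x, E2y.
  rewrite (dist2_sym (Q 3) (Q 1)), (dist2_sym (Q 3) (Q 2)) in E3x, E3y.
  unfold balanced, inv_dist3, Rdiv in *. simpl. repeat split; lra.
Qed.

End CentralConfiguration.

Lemma Rmult_eq0_mid (a b c : R) : a * b * c = 0 -> a <> 0 -> c <> 0 -> b = 0.
Proof.
  intros H Ha Hc.
  destruct (Rmult_integral _ _ H) as [Hab | Hc0]; [| contradiction].
  destruct (Rmult_integral _ _ Hab); [contradiction | assumption].
Qed.

Section FourBodyEquilibrium.
Context {p1 p2 p3 p4 : pt} {m1 m2 m3 m4 t12 t13 t14 t23 t24 t34 : R}.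
Hypothesis B1 : balanced p1 p2 p3 p4 (m2 * t12) (m3 * t13) (m4 * t14).
Hypothesis B2 : balanced p2 p1 p3 p4 (m1 * t12) (m3 * t23) (m4 * t24).
Hypothesis B3 : balanced p3 p1 p2 p4 (m1 * t13) (m2 * t23) (m4 * t34).

Lemma equilibrium_coeffs_vanish :
  m2 <> 0 -> m3 <> 0 -> m4 <> 0 -> orient p1 p2 p3 <> 0 -> orient p2 p3 p4 <> 0 ->
  t14 = 0 -> t12 = 0 /\ t13 = 0 /\ t24 = 0 /\ t34 = 0.
Proof.
  intros n2 n3 n4 n123 n234 H14.
  destruct (balanced_orient B1) as [R1 [_ R1']].
  destruct (balanced_orient B2) as [R2 _].
  destruct (balanced_orient B3) as [R3 _].
  rewrite H14 in R1, R1'.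
  assert (H12 : t12 = 0)
    by (apply (Rmult_eq0_mid m2 _ (orient p1 p2 p3)); auto; rewrite R1; ring).
  assert (H13 : t13 = 0)
    by (apply (Rmult_eq0_mid m3 _ (orient p1 p2 p3)); auto; rewrite R1'; ring).
  assert (H24 : t24 = 0)
    by (apply (Rmult_eq0_mid m4 _ (orient p2 p3 p4)); auto; rewrite <- R2, H12; ring).
  assert (H34 : t34 = 0).
  { apply (Rmult_eq0_mid m4 _ (orient p3 p2 p4)); auto.
    - rewrite <- R3, H13. ring.
    - rewrite orient_swap12. lra. }
  auto.
Qed.

Lemma equilibrium_area_relation :
  m1 * m4 = m2 * m3 -> m1 <> 0 -> m4 <> 0 -> t23 = t14 -> t14 <> 0 ->
  orient p1 p3 p4 * orient p1 p2 p4 = orient p2 p3 p4 * orient p1 p2 p3.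
Proof.
  intros Hm n1 n4 Ht n14.
  destruct (balanced_orient B1) as [R1 _].
  destruct (balanced_orient B2) as [_ [R2 _]].
  rewrite orient_swap12, Ht in R2.
  apply (Rmult_eq_reg_l (m1 * m4 * t14));
    [| repeat apply Rmult_integral_contrapositive_currified; assumption].
  assert (E1 := f_equal (Rmult (m1 * orient p1 p2 p4)) R1).
  assert (E2 := f_equal (Rmult (m2 * orient p1 p2 p3)) R2).
  assert (E3 := f_equal (fun x => x * (t14 * orient p2 p3 p4 * orient p1 p2 p3)) Hm).
  simpl in E3. lra.
Qed.

End FourBodyEquilibrium.

Lemma orient_eq_of_area_relation (p1 p2 p3 p4 : pt) :
  orient p1 p3 p4 * orient p1 p2 p4 = orient p2 p3 p4 * orient p1 p2 p3 ->
  orient p1 p2 p3 + orient p1 p3 p4 <> 0 -> orient p1 p2 p4 = orient p1 p2 p3.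
Proof.
  intros H Hsum.
  rewrite (orient_split p1 p2 p3 p4) in H.
  assert (Hfac : (orient p1 p2 p3 + orient p1 p3 p4) * (orient p1 p2 p4 - orient p1 p2 p3) = 0)
    by lra.
  destruct (Rmult_integral _ _ Hfac); [contradiction | lra].
Qed.

Theorem lemma4p2 (alpha beta : R) (q : nat -> pt) (m : nat -> R) :
  0 < alpha -> alpha < beta ->
  m 1%nat = beta -> m 2%nat = beta -> m 3%nat = alpha -> m 4%nat = alpha ->
  central_configuration q m ->
  convex_quad_in_order (q 1%nat) (q 2%nat) (q 3%nat) (q 4%nat) ->
  dist2 (q 2%nat) (q 3%nat) = dist2 (q 1%nat) (q 4%nat) ->
  oDelta q 4%nat = - oDelta q 3%nat.
Proof.
  intros Ha Hab Hm1 Hm2 Hm3 Hm4 Hcc Hconv Hr.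
  destruct (convex_quad_orient _ _ _ _ Hconv) as (n123 & n234 & nsum).
  assert (Hmass : rsum (map m idx) <> 0) by (simpl; lra).
  destruct (central_configuration_balanced q m Hcc Hmass) as (mu & B1 & B2 & B3).
  assert (Ht : inv_dist3 (q 2%nat) (q 3%nat) + mu = inv_dist3 (q 1%nat) (q 4%nat) + mu)
    by (unfold inv_dist3; rewrite Hr; reflexivity).
  rewrite Ht in B2, B3.
  destruct (Req_dec (inv_dist3 (q 1%nat) (q 4%nat) + mu) 0) as [H14 | H14].
  - exfalso.
    destruct (equilibrium_coeffs_vanish B1 B2 B3) as (H12 & H13 & H24 & H34);
      auto; try lra.
    apply n123, equidistant4_collinear with (q 4%nat); apply inv_dist3_inj; lra.
  - unfold oDelta, tri_area.
    rewrite Ropp_involutive,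
      (orient_eq_of_area_relation (q 1%nat) (q 2%nat) (q 3%nat) (q 4%nat)); auto.
    apply (equilibrium_area_relation B1 B2); auto; try lra.
    rewrite Hm1, Hm2, Hm3, Hm4. ring.
Qed.
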